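(* Let $k$ be a field, $\mathsf{E}$ a locally finite $k$-linear category, $P$ a left $\mathsf{E}$-module, and $Q',Q''\subseteq P$ two big $\mathsf{E}$-submodules of $P$. Then $Q'\cap Q''$ is a big $\mathsf{E}$-submodule of $P$.
   Context: A small $k$-linear category $\mathsf{E}$ has $k$-vector spaces $\operatorname{Hom}_\mathsf{E}(x,y)$, $k$-bilinear associative composition and identities with $\mathrm{id}_x\ne0$. A left $\mathsf{E}$-module is a $k$-linear functor $\mathsf{E}\to k\text{-Vect}$. Write $x\preceq y$ if there are $n\ge1$ and objects $x=z_0,\dots,z_n=y$ with $\operatorname{Hom}_\mathsf{E}(z_{i-1},z_i)\neq0$ for all $i$. $\mathsf{E}$ is locally finite if all Hom spaces are finite-dimensional and every $\{z:x\preceq z\preceq y\}$ is finite. A left $\mathsf{E}$-module $T$ is contrafinite if for every object $y$ there is a finite set of objects $A$ such that the action map $\operatorname{Hom}_\mathsf{E}(x,y)\otimes_kT(x)\to T(y)$ vanishes for all $x\notin A$. A submodule $Q\subseteq P$ is big if $P/Q$ is contrafinite. *)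

From HB Require Import structures.
From mathcomp Require Import all_boot all_order all_algebra.
Set Implicit Arguments. Unset Strict Implicit. Unset Printing Implicit Defensive.
Import GRing.Theory.
Local Open Scope ring_scope.

Record kcat (k : fieldType) := KCat {
  Obj : Type;
  Hom : Obj -> Obj -> lmodType k;
  comp : forall x y z, Hom y z -> Hom x y -> Hom x z;
  idm : forall x, Hom x x;
  comp_linr : forall x y z (g : Hom y z) (a : k) (f f' : Hom x y),
      comp g (a *: f + f') = a *: comp g f + comp g f';
  comp_linl : forall x y z (f : Hom x y) (a : k) (g g' : Hom y z),
      comp (a *: g + g') f = a *: comp g f + comp g' f;
  comp_assoc : forall w x y z (h : Hom y z) (g : Hom x y) (f : Hom w x),
      comp h (comp g f) = comp (comp h g) f;
  comp_idl : forall x y (f : Hom x y), comp (idm y) f = f;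
  comp_idr : forall x y (f : Hom x y), comp f (idm x) = f;
  idm_neq0 : forall x, idm x != 0
}.
Arguments Hom {k} k0 _ _ : rename.

(* Propositional list membership (no eqType needed). *)
Fixpoint inP (T : Type) (z : T) (s : seq T) : Prop :=
  match s with [::] => False | a :: s' => a = z \/ inP z s' end.

Definition findim (k : fieldType) (V : lmodType k) : Prop :=
  exists s : seq V, forall v : V,
    exists c : 'I_(size s) -> k, v = \sum_(i < size s) c i *: s`_i.

(* x ⪯ y : a chain x = z0, ..., zn = y (n >= 1) with nonzero Hom(z_{i-1}, z_i). *)
Inductive prec (k : fieldType) (E : kcat k) : Obj E -> Obj E -> Prop :=
| prec1 (x y : Obj E) : (exists f : Hom E x y, f != 0) -> prec x y
| precS (x y z : Obj E) : (exists f : Hom E x y, f != 0) -> prec y z -> prec x z.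

Definition locally_finite (k : fieldType) (E : kcat k) : Prop :=
  (forall x y, findim (Hom E x y)) /\
  (forall x y, exists s : seq (Obj E),
      forall z, @prec k E x z -> @prec k E z y -> inP z s).

(* Left E-module = k-linear functor E -> k-Vect. *)
Record kmod (k : fieldType) (E : kcat k) := KMod {
  Mod : Obj E -> lmodType k;
  act : forall x y, Hom E x y -> Mod x -> Mod y;
  act_linr : forall x y (f : Hom E x y) (a : k) (v w : Mod x),
      act f (a *: v + w) = a *: act f v + act f w;
  act_linl : forall x y (v : Mod x) (a : k) (f g : Hom E x y),
      act (a *: f + g) v = a *: act f v + act g v;
  act_comp : forall x y z (g : Hom E y z) (f : Hom E x y) (v : Mod x),
      act (comp g f) v = act g (act f v);
  act_id : forall x (v : Mod x), act (idm x) v = v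
}.

(* Contrafinite: for each y, the action maps Hom(x,y) (x) T(x) -> T(y)
   vanish outside a finite set of objects x.  (The map on the tensor
   product vanishes iff it vanishes on all pure tensors f (x) v.) *)
Definition contrafinite (k : fieldType) (E : kcat k) (T : kmod E) : Prop :=
  forall y, exists A : seq (Obj E), forall x, ~ inP x A ->
    forall (f : Hom E x y) (v : Mod T x), act f v = 0.

Definition is_submodule (k : fieldType) (E : kcat k) (P : kmod E)
    (Q : forall x, Mod P x -> Prop) : Prop :=
  (forall x, Q x 0) /\
  (forall x (a : k) (v w : Mod P x), Q x v -> Q x w -> Q x (a *: v + w)) /\
  (forall x y (f : Hom E x y) (v : Mod P x), Q x v -> Q y (act f v)).

Definition is_morphism (k : fieldType) (E : kcat k) (P T : kmod E)
    (pi : forall x, Mod P x -> Mod T x) : Prop :=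
  (forall x (a : k) (v w : Mod P x), pi x (a *: v + w) = a *: pi x v + pi x w) /\
  (forall x y (f : Hom E x y) (v : Mod P x), pi y (act f v) = act f (pi x v)).

Definition is_quotient (k : fieldType) (E : kcat k) (P : kmod E)
    (Q : forall x, Mod P x -> Prop) (T : kmod E)
    (pi : forall x, Mod P x -> Mod T x) : Prop :=
  is_morphism pi /\
  (forall x (t : Mod T x), exists v, pi x v = t) /\
  (forall x (v : Mod P x), pi x v = 0 <-> Q x v).

Definition big (k : fieldType) (E : kcat k) (P : kmod E)
    (Q : forall x, Mod P x -> Prop) : Prop :=
  is_submodule Q /\
  exists (T : kmod E) (pi : forall x, Mod P x -> Mod T x),
    is_quotient Q pi /\ contrafinite T.

Definition subI (k : fieldType) (E : kcat k) (P : kmod E)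
    (Q' Q'' : forall x, Mod P x -> Prop) : forall x, Mod P x -> Prop :=
  fun x v => Q' x v /\ Q'' x v.

From Pilot Require Import Defs.
From HB Require Import structures.
From mathcomp Require Import all_boot all_order all_algebra.
From mathcomp Require Import boolp.
Set Implicit Arguments. Unset Strict Implicit. Unset Printing Implicit Defensive.
Import GRing.Theory.
Local Open Scope ring_scope.

(* If [pi1 : P -> P/Q'] and [pi2 : P -> P/Q''] are the quotient maps, then
   [v |-> (pi1 v, pi2 v)] maps P onto a submodule of P/Q' x P/Q'' with kernel
   Q' /\ Q''.  That image is a model of P/(Q' /\ Q''), and its action maps into
   an object y vanish outside the union of the finite sets witnessing the
   contrafiniteness of P/Q' and P/Q''. *)

Lemma inP_cat (T : Type) (z : T) (s1 s2 : seq T) :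
  inP z (s1 ++ s2) <-> inP z s1 \/ inP z s2.
Proof.
elim: s1 => [|a s IH] /=; first by split; [right | case].
by rewrite IH; tauto.
Qed.

Lemma is_submoduleI (k : fieldType) (E : kcat k) (P : kmod E)
    (Q' Q'' : forall x, Mod P x -> Prop) :
  is_submodule Q' -> is_submodule Q'' -> is_submodule (subI Q' Q'').
Proof.
move=> [Q'0 [Q'D Q'act]] [Q''0 [Q''D Q''act]].
split; first by [].
split; first by move=> x a v w [? ?] [? ?]; split; [apply: Q'D | apply: Q''D].
by move=> x y f v [? ?]; split; [apply: Q'act | apply: Q''act].
Qed.

Lemma morphism0 (k : fieldType) (E : kcat k) (P T : kmod E)
    (pi : forall x, Mod P x -> Mod T x) :
  is_morphism pi -> forall x, pi x 0 = 0.
Proof.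
move=> [pi_lin _] x; have := pi_lin x 1 0 0; rewrite scale1r addr0 scale1r => e.
by apply: (addrI (pi x 0)); rewrite addr0 -e.
Qed.

Section JointImage.

Variables (k : fieldType) (E : kcat k) (P T1 T2 : kmod E).
Variables (pi1 : forall x, Mod P x -> Mod T1 x) (pi2 : forall x, Mod P x -> Mod T2 x).
Hypotheses (pi1_morph : is_morphism pi1) (pi2_morph : is_morphism pi2).

Definition joint_image (x : Obj E) : pred (Mod T1 x * Mod T2 x) :=
  fun t => `[< exists v, (pi1 v, pi2 v) = t >].
Arguments joint_image : clear implicits.

Lemma joint_image_closed x : subsemimod_closed (joint_image x).
Proof.
have [lin1 _] := pi1_morph; have [lin2 _] := pi2_morph.
split; first split.
- by apply/asboolP; exists 0; rewrite !morphism0.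
- move=> _ _ /asboolP[v <-] /asboolP[w <-]; apply/asboolP.
  by exists (1 *: v + w); rewrite lin1 lin2 !scale1r.
- move=> a _ /asboolP[v <-]; apply/asboolP.
  by exists (a *: v + 0); rewrite lin1 lin2 !morphism0 // !addr0.
Qed.

Definition joint_image_type x := {t | joint_image x t}.

HB.instance Definition _ x :=
  [isSub for (@proj1_sig _ _ : joint_image_type x -> _)].
HB.instance Definition _ x := [Choice of joint_image_type x by <:].
HB.instance Definition _ x :=
  GRing.SubChoice_isSubLmodule.Build k _ (joint_image x) (joint_image_type x)
    (joint_image_closed x).

Lemma joint_image_act x y (f : Defs.Hom E x y) (t : Mod T1 x * Mod T2 x) :
  joint_image x t -> joint_image y (act f t.1, act f t.2).
Proof.
have [_ act1] := pi1_morph; have [_ act2] := pi2_morph.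
by move=> /asboolP[v <-]; apply/asboolP; exists (act f v); rewrite act1 act2.
Qed.

Definition joint_image_mod : kmod E.
Proof.
refine (@KMod k E joint_image_type
  (fun x y f w => exist (joint_image y) _ (joint_image_act f (valP w))) _ _ _ _).
- by move=> x y f a v w; apply: val_inj; rewrite /= !act_linr.
- by move=> x y v a f g; apply: val_inj; rewrite /= !act_linl.
- by move=> x y z g f v; apply: val_inj; rewrite /= !act_comp.
- by move=> x [[t1 t2] ?]; apply: val_inj; rewrite /= !act_id.
Defined.

Definition joint_proj x (v : Mod P x) : Mod joint_image_mod x :=
  exist (joint_image x) (pi1 v, pi2 v) (asboolT (ex_intro _ v erefl)).

Lemma joint_proj_morphism : is_morphism joint_proj.
Proof.
have [lin1 act1] := pi1_morph; have [lin2 act2] := pi2_morph.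
split=> [x a v w | x y f v]; apply: val_inj => /=.
- by rewrite lin1 lin2.
- by rewrite act1 act2.
Qed.

Lemma joint_proj_onto x (t : Mod joint_image_mod x) : exists v, joint_proj v = t.
Proof. by case: t => t /[dup] /asboolP[v ev] tP; exists v; apply: val_inj. Qed.

Lemma joint_proj_eq0 x (v : Mod P x) :
  joint_proj v = 0 <-> pi1 v = 0 /\ pi2 v = 0.
Proof.
split; first by move/(congr1 val) => [-> ->].
by move=> [e1 e2]; apply: val_inj; rewrite /= e1 e2.
Qed.

Lemma joint_image_contrafinite : contrafinite T1 -> contrafinite T2 ->
  contrafinite joint_image_mod.
Proof.
move=> cf1 cf2 y; have [A1 A1P] := cf1 y; have [A2 A2P] := cf2 y.
exists (A1 ++ A2) => x /inP_cat notA f w; apply: val_inj => /=.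
by rewrite A1P ?A2P // => ?; apply: notA; [right | left].
Qed.

End JointImage.

Theorem lemma4p9 (k : fieldType) (E : kcat k) (P : kmod E)
    (Q' Q'' : forall x : Obj E, Mod P x -> Prop) :
  locally_finite E -> big Q' -> big Q'' -> big (subI Q' Q'').
Proof.
move=> _ [subQ' [T1 [pi1 [[pi1_morph [_ ker1]] cf1]]]]
         [subQ'' [T2 [pi2 [[pi2_morph [_ ker2]] cf2]]]].
split; first exact: is_submoduleI.
exists (joint_image_mod pi1_morph pi2_morph), (joint_proj pi1_morph pi2_morph).
split; last exact: joint_image_contrafinite.
split; first exact: joint_proj_morphism.
split; first exact: joint_proj_onto.
by move=> x v; rewrite joint_proj_eq0 ker1 ker2.
Qed.
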